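(* Let $n$ be a parameter and let $p=p(n)$ be a positive integer with $p=O(2^{n^k})$ for some constant $k$. Then for any polynomial $s(n)$ there is a polynomial $t(n)$ such that whenever $q$ is an integer with $q\geq t(n)\,p$, for the superpositions $\boldsymbol\beta=\mathrm{FT}_p(\boldsymbol\alpha)$ and $\boldsymbol\gamma=\mathrm{FT}_q(\boldsymbol\alpha)$ of an input superposition $\boldsymbol\alpha$ we have $$\|\mathcal D_{\boldsymbol\beta}-\mathcal D_{\boldsymbol\gamma}\|_1=\sum_{i=0}^{p-1}\left|\mathcal D_{\boldsymbol\beta}(i)-\mathcal D_{\boldsymbol\gamma}(i)\right|\leq \frac{1}{s(n)}.$$
   Context: Write $[p]=\{0,1,\dots,p-1\}$ and $\omega_N=e^{2\pi i/N}$. An input superposition is a unit vector $\boldsymbol\alpha=\sum_{i=0}^{p-1}\alpha_i|i\rangle\in\mathbb C^p$. For an integer $N\ge p$, the Fourier transform over $\mathbb Z_N$ of $\boldsymbol\alpha$ (viewed as a vector in $\mathbb C^N$ with zero entries at indices $\ge p$) is $\mathrm{FT}_N(\boldsymbol\alpha)=\sum_{c=0}^{N-1}\left(\frac{1}{\sqrt N}\sum_{i=0}^{p-1}\omega_N^{ic}\alpha_i\right)|c\rangle$. Write $\boldsymbol\beta=\sum_{i=0}^{p-1}\beta_i|i\rangle$ and $\boldsymbol\gamma=\sum_{i=0}^{q-1}\gamma_i|i\rangle$ with $q>p$. For $i\in[p]$ let $i'=\lfloor \frac{q}{p}i\rfloor$. Define the distributions on $[p]$: $\mathcal D_{\boldsymbol\beta}(i)=|\beta_i|^2$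 and $\mathcal D_{\boldsymbol\gamma}(i)=\frac{|\gamma_{i'}|^2}{\sum_{l\in[p]}|\gamma_{l'}|^2}$ (the distribution of $i$ obtained by measuring $\boldsymbol\gamma$ and conditioning on the outcome being of the form $i'$). *)

From HB Require Import structures.
From mathcomp Require Import all_boot all_order all_algebra.
From mathcomp Require Import complex.
From mathcomp Require Import reals trigo.
Set Implicit Arguments. Unset Strict Implicit. Unset Printing Implicit Defensive.
Import Order.TTheory GRing.Theory Num.Theory.
Local Open Scope ring_scope.
Local Open Scope complex_scope.

Section Defs.
Variable R : realType.

Definition omega (N : nat) : R[i] := cos (2 * pi / N%:R) +i* sin (2 * pi / N%:R).

Definition normsq (z : R[i]) : R := let: a +i* b := z in a ^+ 2 + b ^+ 2.

(* c-th coordinate of FT_N(alpha), alpha in C^p padded with zeros *)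
Definition FT (N p : nat) (alpha : 'I_p -> R[i]) (c : nat) : R[i] :=
  ((Num.sqrt (N%:R : R))^-1)%:C * \sum_(i < p) omega N ^+ (i * c) * alpha i.

Definition is_superposition (p : nat) (alpha : 'I_p -> R[i]) : Prop :=
  \sum_(i < p) normsq (alpha i) = 1.

Definition iprime (p q i : nat) : nat := (q * i %/ p)%N.

Definition D_beta (p : nat) (alpha : 'I_p -> R[i]) (i : nat) : R :=
  normsq (FT p alpha i).

Definition D_gamma (p q : nat) (alpha : 'I_p -> R[i]) (i : nat) : R :=
  normsq (FT q alpha (iprime p q i)) /
  \sum_(l < p) normsq (FT q alpha (iprime p q l)).

Definition L1dist (p q : nat) (alpha : 'I_p -> R[i]) : R :=
  \sum_(i < p) `| D_beta alpha i - D_gamma q alpha i |.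
End Defs.

(* Write b_i = sum_j w_p^(j i) a_j and g_i = sum_j w_q^(j i') a_j for the unnormalised
   amplitudes.  Since q i = i' p + r with r < p, we have w_q^(j i') = w_p^(j i) (1 + e_i)^j
   with |e_i| = O(1/q), and the binomial expansion of (1 + e_i)^j - 1 writes g_i - b_i as
   sum_k e_i^(k+1) F_k(i), where F_k is the p-point Fourier transform of C(j, k+1) a_j.
   Parseval bounds each F_k, and a weighted Cauchy-Schwarz inequality then gives
   sum_i |g_i - b_i|^2 = O(p^3 / q^2) however large p is.  Comparing |g_i|^2 with
   |b_i|^2 by AM-GM and renormalising bounds the L1 distance by O(p / q), which is
   below 1/s(n) as soon as q >= 256 (s(n) + 1) p. *)

From HB Require Import structures.
From mathcomp Require Import all_boot all_order all_algebra.
From mathcomp Require Import complex.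
From mathcomp Require Import reals trigo.
From mathcomp Require Import ring lra.
From mathcomp Require Import classical_sets topology normedtype derive.
Import numFieldNormedType.Exports.
Set Implicit Arguments. Unset Strict Implicit. Unset Printing Implicit Defensive.
Import Order.TTheory GRing.Theory Num.Theory.
Local Open Scope ring_scope.

Section ComplexModulus.
Local Open Scope complex_scope.
Variable R : realType.
Implicit Types (z w : R[i]) (c : R).

Lemma normsq_ge0 z : 0 <= normsq z.
Proof. by case: z => a b /=; rewrite addr_ge0 ?sqr_ge0. Qed.

Lemma normsqM z w : normsq (z * w) = normsq z * normsq w.
Proof. by case: z => a b; case: w => c d /=; ring. Qed.

Lemma normsqX z k : normsq (z ^+ k) = normsq z ^+ k.
Proof.
elim: k => [|k IH]; first by rewrite !expr0 /=; ring.
by rewrite !exprS normsqM IH.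
Qed.

Lemma normsq_scale c z : normsq (c%:C * z) = c ^+ 2 * normsq z.
Proof. by case: z => a b /=; ring. Qed.

Lemma normsq_mulconj z : (normsq z)%:C = z * z^*.
Proof.
by case: z => a b; apply/eqP; rewrite eq_complex /=; apply/andP; split; apply/eqP; ring.
Qed.

Lemma dist_normsq_le z w c : 0 < c ->
  `|normsq w - normsq z| <= normsq (w - z) * (1 + c^-1) + c * normsq z.
Proof.
move=> c_gt0; case: z => a b; case: w => u v /=.
set x := u - a; set y := v - b.
have -> : u = a + x by rewrite /x; ring.
have -> : v = b + y by rewrite /y; ring.
have -> : (a + x) ^+ 2 + (b + y) ^+ 2 - (a ^+ 2 + b ^+ 2) = 2 * (a * x + b * y) + (x ^+ 2 + y ^+ 2)
  by ring.
(* AM-GM: [2 |<z, w - z>| <= c |z|^2 + |w - z|^2 / c] *)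
have amgm : `|2 * (a * x + b * y)| <= c * (a ^+ 2 + b ^+ 2) + (x ^+ 2 + y ^+ 2) / c.
  have sq_ge0 (e : R) : 0 <= c^-1 * ((c * a + e * x) ^+ 2 + (c * b + e * y) ^+ 2).
    by rewrite mulr_ge0 ?addr_ge0 ?sqr_ge0 // invr_ge0 ltW.
  have sqE (e : R) : c^-1 * ((c * a + e * x) ^+ 2 + (c * b + e * y) ^+ 2) =
      c * (a ^+ 2 + b ^+ 2) + e ^+ 2 * (x ^+ 2 + y ^+ 2) / c + e * (2 * (a * x + b * y)).
    by field; rewrite gt_eqF.
  have := sq_ge0 1; have := sq_ge0 (-1); rewrite !sqE.
  rewrite ler_norml sqrrN expr1n !mul1r; lra.
have n_ge0 : 0 <= x ^+ 2 + y ^+ 2 by rewrite addr_ge0 ?sqr_ge0.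
rewrite (le_trans (ler_normD _ _)) // (ger0_norm n_ge0).
by move: amgm; rewrite mulrDr; lra.
Qed.

Lemma normsq_eq0 z : (normsq z == 0) = (z == 0).
Proof.
case: z => a b /=; rewrite paddr_eq0 ?sqr_ge0 // !sqrf_eq0.
by rewrite eq_complex.
Qed.

Lemma normsqD_le z w (l L Q : R) : 0 < l -> 0 <= L -> 0 <= Q -> normsq w <= L * Q ->
  normsq (z + w) <= (l + L) * (normsq z / l + Q).
Proof.
move=> l_gt0 L_ge0 Q_ge0 wQ; have [L0|L_neq0] := eqVneq L 0.
  move: wQ; rewrite L0 mul0r addr0 => w_le0.
  have /eqP -> : w == 0 by rewrite -normsq_eq0 eq_le w_le0 normsq_ge0.
  by rewrite addr0 mulrDr mulrCA divff ?gt_eqF // mulr1 lerDl mulr_ge0 // ltW.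
have L_gt0 : 0 < L by rewrite lt_def L_neq0.
have c_gt0 : 0 < L / l by rewrite divr_gt0.
have := dist_normsq_le z (z + w) c_gt0; rewrite [z + w - z]addrC addKr ler_norml => /andP[_].
have -> : normsq w * (1 + (L / l)^-1) = (l + L) * (normsq w / L) by field; rewrite !gt_eqF.
have : normsq w / L <= Q by rewrite ler_pdivrMr // mulrC.
have -> : (l + L) * (normsq z / l + Q) = normsq z + L / l * normsq z + (l + L) * Q
  by field; rewrite gt_eqF.
move=> wLQ; have := ler_wpM2l (ltW (addr_gt0 l_gt0 L_gt0)) wLQ; lra.
Qed.

Lemma normsq_sum_le (I : Type) (r : seq I) (lam : I -> R) (f : I -> R[i]) :
  (forall k, 0 < lam k) ->
  normsq (\sum_(k <- r) f k) <= (\sum_(k <- r) lam k) * \sum_(k <- r) normsq (f k) / lam k.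
Proof.
move=> lam_gt0; elim: r => [|k r IH]; first by rewrite !big_nil /= mul0r; lra.
rewrite !big_cons; apply: normsqD_le => //.
- by rewrite sumr_ge0 // => j _; rewrite ltW.
- by rewrite sumr_ge0 // => j _; rewrite divr_ge0 ?normsq_ge0 ?ltW.
Qed.

Lemma normsq_prim_root N (w : R[i]) : N.-primitive_root w -> normsq w = 1.
Proof.
move=> w_prim; apply/eqP.
rewrite -(pexpr_eq1 (prim_order_gt0 w_prim) (normsq_ge0 w)) -normsqX.
by rewrite prim_expr_order //=; apply/eqP; ring.
Qed.

End ComplexModulus.

Lemma sum_expr_prim_root (F : idomainType) N (w : F) m : N.-primitive_root w ->
  \sum_(i < N) (w ^+ m) ^+ i = (N %| m)%N%:R * N%:R.
Proof.
move=> w_prim; have [N_dvd_m|N_ndvd_m] := boolP (N %| m)%N.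
  rewrite mul1r; move: N_dvd_m; rewrite (prim_order_dvd w_prim) => /eqP ->.
  by under eq_bigr do rewrite expr1n; rewrite sumr_const card_ord.
rewrite mul0r; move: N_ndvd_m; rewrite (prim_order_dvd w_prim) => wm_neq1.
have := subrX1 (w ^+ m) N; rewrite exprAC (prim_expr_order w_prim) expr1n subrr.
by move/esym/eqP; rewrite mulf_eq0 subr_eq0 (negbTE wm_neq1) => /eqP.
Qed.

Section DiscreteFourier.
Local Open Scope complex_scope.
Variable R : realType.

Definition dft {N : nat} (w : R[i]) (y : 'I_N -> R[i]) (c : nat) : R[i] :=
  \sum_(j < N) w ^+ (j * c) * y j.

Lemma dft_orthogonal N (w : R[i]) (j k : 'I_N) : N.-primitive_root w ->
  \sum_(i < N) w ^+ (j * i) * (w ^+ (k * i))^* = (j == k)%:R * N%:R.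
Proof.
move=> w_prim; wlog le_kj : j k / (k <= j)%N.
  move=> sym; case: (leqP k j) => [/sym //|/ltnW /sym].
  move/(congr1 conjc); rewrite rmorph_sum rmorphM /= !rmorph_nat eq_sym => <-.
  by apply: eq_bigr => i _; rewrite rmorphM /= conjcK mulrC.
have w_unit : w * w^* = 1 by rewrite -normsq_mulconj (normsq_prim_root w_prim).
have -> : \sum_(i < N) w ^+ (j * i) * (w ^+ (k * i))^* = \sum_(i < N) (w ^+ (j - k)) ^+ i.
  apply: eq_bigr => i _; rewrite -(subnK le_kj) mulnDl exprD rmorphXn /= -mulrA -exprMn.
  by rewrite w_unit expr1n mulr1 exprM addnK.
rewrite sum_expr_prim_root // /dvdn modn_small; last first.
  exact: leq_ltn_trans (leq_subr k j) (ltn_ord j).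
by rewrite subn_eq0 -val_eqE eqn_leq le_kj andbT.
Qed.

Lemma parseval N (w : R[i]) (y : 'I_N -> R[i]) : N.-primitive_root w ->
  \sum_(i < N) normsq (dft w y i) = N%:R * \sum_(j < N) normsq (y j).
Proof.
move=> w_prim; apply: complexI; rewrite !rmorph_sum rmorphM rmorph_sum /= big_distrr /=.
transitivity (\sum_(j < N) \sum_(k < N) y j * (y k)^* *
                \sum_(i < N) w ^+ (j * i) * (w ^+ (k * i))^*).
  under eq_bigr do rewrite normsq_mulconj rmorph_sum big_distrl /=.
  rewrite exchange_big; apply: eq_bigr => j _ /=.
  under eq_bigr do rewrite big_distrr /=.
  rewrite exchange_big; apply: eq_bigr => k _ /=; rewrite big_distrr /=.
  by apply: eq_bigr => i _; rewrite rmorphM /=; ring.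
apply: eq_bigr => j _; under eq_bigr => k _ do rewrite dft_orthogonal //.
rewrite (bigD1 j) //= eqxx mul1r big1 ?addr0 => [|k /negbTE k_neq_j]; last first.
  by rewrite eq_sym k_neq_j mul0r mulr0.
by rewrite normsq_mulconj rmorph_nat mulrC.
Qed.

End DiscreteFourier.

Arguments dft {R N} w y c.

Lemma bin_leq_exp n m : ('C(n, m) <= n ^ m)%N.
Proof.
apply: leq_trans (_ : 'C(n, m) * m`! <= _)%N; first by rewrite leq_pmulr // fact_gt0.
rewrite bin_ffact ffact_prod -[in X in (_ <= X)%N](card_ord m) -prod_nat_const.
by apply: leq_prod => i _; rewrite leq_subr.
Qed.

Lemma exprD1n_sub1 (F : comPzRingType) (z : F) j N : (j < N)%N ->
  (z + 1) ^+ j - 1 = \sum_(k < N) z ^+ k.+1 *+ 'C(j, k.+1).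
Proof.
move=> lt_jN; rewrite exprD1n big_ord_recl /= expr0 bin0 mulr1n [1 + _]addrC addrK.
rewrite (big_ord_widen N (fun k => z ^+ k.+1 *+ 'C(j, k.+1)) (ltnW lt_jN)) big_mkcond /=.
apply: eq_bigr => k _; case: ifP => // /negbT; rewrite -leqNgt => le_jk.
by rewrite bin_small ?mulr0n // ltnS.
Qed.

Lemma sum_exprS_le (R : realFieldType) (x : R) n : 0 <= x <= 1 / 2 ->
  \sum_(k < n) x ^+ k.+1 <= 2 * x.
Proof.
move=> /andP[x_ge0 x_le].
have -> : \sum_(k < n) x ^+ k.+1 = \sum_(k < n) x ^+ k * x.
  by apply: eq_bigr => k _; rewrite exprSr.
rewrite -mulr_suml ler_wpM2r //.
have geom : (1 - x) * \sum_(k < n) x ^+ k = 1 - x ^+ n.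
  by rewrite -[1 - x ^+ n]opprB subrX1 -mulNr opprB.
have : 0 <= x ^+ n by rewrite exprn_ge0.
have : 0 <= \sum_(k < n) x ^+ k by rewrite sumr_ge0 // => k _; rewrite exprn_ge0.
nra.
Qed.

Section DftPerturbation.
Local Open Scope complex_scope.
Variables (R : realType) (N : nat) (w : R[i]) (alpha : 'I_N -> R[i]).
Hypotheses (w_prim : N.-primitive_root w) (alpha_unit : \sum_(j < N) normsq (alpha j) = 1).

Let binomial_weighted k (j : 'I_N) : R[i] := 'C(j, k.+1)%:R * alpha j.

Lemma sum_normsq_dft_binomial_le k :
  \sum_(i < N) normsq (dft w (binomial_weighted k) i) <= N%:R * (N%:R ^+ k.+1) ^+ 2.
Proof.
rewrite parseval // ler_wpM2l //.
apply: le_trans (_ : _ <= \sum_(j < N) (N%:R ^+ k.+1) ^+ 2 * normsq (alpha j)) _; last first.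
  by rewrite -mulr_sumr alpha_unit mulr1.
apply: ler_sum => j _; rewrite /binomial_weighted -(rmorph_nat (real_complex R)) normsq_scale.
rewrite ler_wpM2r ?normsq_ge0 // lerXn2r ?nnegrE ?exprn_ge0 // -natrX ler_nat.
by apply: leq_trans (bin_leq_exp _ _) _; rewrite leq_exp2r // ltnW.
Qed.

Lemma dft_perturb_expand (eps : R[i]) i :
  \sum_(j < N) w ^+ (j * i) * (((eps + 1) ^+ j - 1) * alpha j)
  = \sum_(k < N) eps ^+ k.+1 * dft w (binomial_weighted k) i.
Proof.
under [RHS]eq_bigr do rewrite big_distrr /=.
rewrite exchange_big; apply: eq_bigr => j _ /=.
rewrite (@exprD1n_sub1 _ eps _ _ (ltn_ord j)) mulr_suml mulr_sumr; apply: eq_bigr => k _.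
by rewrite /binomial_weighted -mulr_natr; ring.
Qed.

(* The Cauchy-Schwarz weights [x^(k+1)] match [|C(j, k+1) eps^(k+1)| <= x^(k+1)],
   which makes the bound independent of [N]. *)
Lemma sum_normsq_dft_perturb_le (eps : nat -> R[i]) (x : R) : 0 < x <= 1 / 2 ->
  (forall i, normsq (eps i) <= (x / N%:R) ^+ 2) ->
  \sum_(i < N) normsq (\sum_(j < N) w ^+ (j * i) * (((eps i + 1) ^+ j - 1) * alpha j))
  <= 4 * x ^+ 2 * N%:R.
Proof.
move=> /andP[x_gt0 x_le] eps_le; have x_ge0 := ltW x_gt0.
have N_gt0 : (0 < N)%N := prim_order_gt0 w_prim.
set A := \sum_(k < N) x ^+ k.+1.
have A_ge0 : 0 <= A by rewrite sumr_ge0 // => k _; rewrite exprn_ge0.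
have A_le : A <= 2 * x by apply: sum_exprS_le; rewrite x_ge0 x_le.
pose c k := x ^+ k.+1 / (N%:R ^+ k.+1) ^+ 2.
have cauchy_schwarz i : normsq (\sum_(k < N) eps i ^+ k.+1 * dft w (binomial_weighted k) i)
    <= A * \sum_(k < N) c k * normsq (dft w (binomial_weighted k) i).
  apply: le_trans (@normsq_sum_le _ _ _ (fun k : 'I_N => x ^+ k.+1) _ _) _.
    by move=> k; rewrite exprn_gt0.
  rewrite ler_wpM2l //; apply: ler_sum => k _.
  rewrite normsqM normsqX mulrAC ler_wpM2r ?normsq_ge0 //.
  apply: (@le_trans _ _ (((x / N%:R) ^+ 2) ^+ k.+1 / x ^+ k.+1)).
    rewrite ler_wpM2r ?invr_ge0 ?exprn_ge0 // lerXn2r ?nnegrE ?normsq_ge0 ?exprn_ge0 //.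
    by rewrite divr_ge0.
  rewrite [X in X <= _](_ : _ = c k) // exprAC expr_div_n /c.
  by field; rewrite !expf_neq0 // ?pnatr_eq0 -?lt0n ?gt_eqF.
under eq_bigr do rewrite dft_perturb_expand.
apply: le_trans (ler_sum _ (fun (i : 'I_N) _ => cauchy_schwarz i)) _.
rewrite -mulr_sumr exchange_big /=.
under eq_bigr do rewrite -mulr_sumr.
have sum_le : \sum_(k < N) c k * \sum_(i < N) normsq (dft w (binomial_weighted k) i) <= N%:R * A.
  rewrite /A mulr_sumr; apply: ler_sum => k _.
  apply: le_trans (ler_wpM2l _ (sum_normsq_dft_binomial_le k)) _.
    by rewrite /c divr_ge0 ?exprn_ge0.
  rewrite [X in X <= _](_ : _ = N%:R * x ^+ k.+1) //.
  by rewrite /c; field; rewrite !expf_neq0 // pnatr_eq0 -lt0n.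
apply: le_trans (ler_wpM2l A_ge0 sum_le) _.
have AA : A * A <= 4 * x ^+ 2 by nra.
by rewrite mulrCA mulrC ler_wpM2r.
Qed.

End DftPerturbation.

Section Phases.
Local Open Scope complex_scope.
Variable R : realType.

Definition cis (t : R) : R[i] := cos t +i* sin t.

Lemma cisD s t : cis (s + t) = cis s * cis t.
Proof. by rewrite /cis cosD sinD; congr (_ +i* _); ring. Qed.

Lemma cisX t k : cis t ^+ k = cis (k%:R * t).
Proof.
elim: k => [|k IH]; first by rewrite expr0 mul0r /cis cos0 sin0.
by rewrite exprS IH -cisD -{1}(mul1r t) -mulrDl addrC -natr1.
Qed.

Lemma sin_le (x : R) : 0 <= x -> sin x <= x.
Proof.
rewrite le_eqVlt => /predU1P[<-|x_gt0]; first by rewrite sin0.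
have sin' y : y \in `]0, x[%R -> is_derive y 1 (@sin R) (cos y).
  by move=> _; exact: is_derive_sin.
have sin_cont : {within `[0, x], continuous (@sin R)}%classic.
  by apply: continuous_subspaceT => y; exact: continuous_sin.
have [c _] := MVT x_gt0 sin' sin_cont; rewrite sin0 !subr0 => ->.
by rewrite ler_piMl ?cos_le1 // ltW.
Qed.

Lemma one_sub_cos_le (x : R) : 1 - cos x <= x ^+ 2.
Proof.
rewrite -cos_norm -(real_normK (num_real x)); move: (normr_ge0 x); set y : R := `|x|.
rewrite le_eqVlt => /predU1P[<-|y_gt0]; first by rewrite cos0 subrr sqr_ge0.
have cos' z : z \in `]0, y[%R -> is_derive z 1 (@cos R) (- sin z).
  by move=> _; exact: is_derive_cos.
have cos_cont : {within `[0, y], continuous (@cos R)}%classic.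
  by apply: continuous_subspaceT => z; exact: continuous_cos.
have [c /[!in_itv]/= /andP[c_gt0 c_lt] cosE] := MVT y_gt0 cos' cos_cont.
have : 1 - cos y = sin c * y by rewrite -cos0 -opprB cosE subr0 mulNr opprK.
move=> ->; rewrite expr2 (ler_wpM2r (ltW y_gt0)) //.
have := sin_le (ltW c_gt0); lra.
Qed.

Lemma normsq_cis_sub1_le t : normsq (cis t - 1) <= 2 * t ^+ 2.
Proof.
have := one_sub_cos_le t; have := cos2Dsin2 t.
by rewrite /cis /=; nra.
Qed.

Lemma cis_neq1 t : 0 < t < 2 * pi -> cis t != 1.
Proof.
move=> /andP[t_gt0 t_lt]; apply/eqP => -[cos_t1 _].
have : 0 < sin (t / 2) by apply: sin_gt0_pi; apply/andP; split; lra.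
have : cos t = 1 - 2 * sin (t / 2) ^+ 2.
  have half : (t / 2) *+ 2 = t by rewrite -mulr_natr; field.
  by rewrite -{1}half cos_mulr2n cos2sin2 -mulr_natr; ring.
nra.
Qed.

Lemma omegaE N : omega R N = cis (2 * pi / N%:R).
Proof. by []. Qed.

Lemma omega_prim_root N : (0 < N)%N -> N.-primitive_root (omega R N).
Proof.
move=> N_gt0; have N_neq0 : N%:R != 0 :> R by rewrite pnatr_eq0 -lt0n.
apply/andP; split => //; apply/forallP => m; rewrite unity_rootE omegaE cisX.
move: (ltn_ord m); rewrite leq_eqVlt => /orP[/eqP ->|lt_mN].
  rewrite eqxx eqb_id (_ : N%:R * _ = pi *+ 2); last by rewrite -mulr_natl; field.
  by rewrite /cis cos2pi sin2pi.
rewrite (ltn_eqF lt_mN) eqbF_neg cis_neq1 //.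
have m_lt : (m.+1)%:R < N%:R :> R by rewrite ltr_nat.
have m_gt0 : 0 < (m.+1)%:R :> R by rewrite ltr0n.
have pi_gt0 := @pi_gt0 R.
have -> : (m.+1)%:R * (2 * pi / N%:R) = 2 * pi * ((m.+1)%:R / N%:R) :> R.
  by rewrite mulrCA mulrA.
have N_gt0' : 0 < N%:R :> R := lt_trans m_gt0 m_lt.
rewrite mulr_gt0 ?divr_gt0 ?mulr_gt0 //=.
by rewrite gtr_pMr ?mulr_gt0 // ltr_pdivrMr // mul1r.
Qed.

(* Writing [q i = i' p + r], the phase [2 pi j i' / q] differs from [2 pi j i / p]
   by [j] times the small angle [2 pi r / (q p)]. *)
Lemma omega_iprime P q i j : (0 < P)%N -> (0 < q)%N ->
  omega R q ^+ (j * iprime P q i)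
  = omega R P ^+ (j * i) * cis (- (2 * pi * ((q * i) %% P)%:R / (q * P)%:R)) ^+ j.
Proof.
move=> P_gt0 q_gt0; rewrite !omegaE !cisX -cisD; congr cis.
have := divn_eq (q * i) P; move/(congr1 (fun n => n%:R : R)).
rewrite natrD !natrM -/(iprime P q i) => qiE.
have q_neq0 : q%:R != 0 :> R by rewrite pnatr_eq0 -lt0n.
rewrite [i%:R](_ : _ = (q%:R * i%:R) / q%:R); last by rewrite mulrAC divff ?mul1r.
by rewrite qiE; field; rewrite q_neq0 pnatr_eq0 -lt0n P_gt0.
Qed.

Lemma normsq_twiddle_le P q r : (0 < P)%N -> (0 < q)%N -> (r < P)%N ->
  normsq (cis (- (2 * pi * r%:R / (q * P)%:R)) - 1) <= (16 / q%:R) ^+ 2.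
Proof.
move=> P_gt0 q_gt0 lt_rP; apply: le_trans (normsq_cis_sub1_le _) _; rewrite sqrrN.
have q_gt0' : 0 < q%:R :> R by rewrite ltr0n.
have P_gt0' : 0 < P%:R :> R by rewrite ltr0n.
have pi_lt4 : pi < 4 :> R by have := @pihalf_lt2 R; lra.
have pi_gt0 := @pi_gt0 R.
set theta := 2 * pi * r%:R / (q * P)%:R.
have -> : theta = (2 * pi / q%:R) * (r%:R / P%:R).
  by rewrite /theta natrM; field; rewrite !gt_eqF.
have r_le : r%:R / P%:R <= 1 :> R by rewrite ler_pdivrMr // mul1r ler_nat ltnW.
have r_ge0 : 0 <= r%:R / P%:R :> R by rewrite divr_ge0.
have pq_le : 2 * pi / q%:R <= 8 / q%:R :> R by rewrite ler_pM2r ?invr_gt0 //; lra.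
have pq_ge0 : 0 <= 2 * pi / q%:R :> R by rewrite divr_ge0 // ltW // mulr_gt0.
have t_ge0 := mulr_ge0 pq_ge0 r_ge0.
have t_le : 2 * pi / q%:R * (r%:R / P%:R) <= 8 / q%:R :> R.
  by apply: le_trans _ pq_le; rewrite ler_piMr.
have -> : 16 / q%:R = 2 * (8 / q%:R) :> R by rewrite mulrA -natrM.
nra.
Qed.

End Phases.

Lemma sum_normsq_dft_iprime_sub_le (R : realType) P q (alpha : 'I_P -> R[i]) :
  (0 < P)%N -> (0 < q)%N -> \sum_(j < P) normsq (alpha j) = 1 ->
  16 * P%:R / q%:R <= 1 / 2 :> R ->
  \sum_(i < P) normsq (dft (omega R q) alpha (iprime P q i) - dft (omega R P) alpha i)
  <= 4 * (16 * P%:R / q%:R) ^+ 2 * P%:R.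
Proof.
move=> P_gt0 q_gt0 alpha_unit x_le.
pose eps i := cis (- (2 * pi * ((q * i) %% P)%:R / (q * P)%:R)) - 1 : R[i].
have -> : \sum_(i < P) normsq (dft (omega R q) alpha (iprime P q i) - dft (omega R P) alpha i)
    = \sum_(i < P) normsq (\sum_(j < P) omega R P ^+ (j * i) * (((eps i + 1) ^+ j - 1) * alpha j)).
  apply: eq_bigr => i _; rewrite /dft -sumrB; congr normsq; apply: eq_bigr => j _.
  by rewrite subrK omega_iprime //; ring.
have Pr_gt0 : 0 < P%:R :> R by rewrite ltr0n.
apply: sum_normsq_dft_perturb_le; rewrite ?omega_prim_root ?x_le ?andbT //.
  by rewrite !mulr_gt0 ?invr_gt0 ?ltr0n.
move=> i; rewrite (_ : _ / P%:R = 16 / q%:R); last by field; rewrite !gt_eqF ?ltr0n.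
exact: normsq_twiddle_le (ltn_pmod _ _).
Qed.

Lemma sum_dist_normsq_le (R : realType) N (b g : 'I_N -> R[i]) (D c : R) : 0 < c ->
  \sum_i normsq (g i - b i) <= D ->
  \sum_i `|normsq (g i) - normsq (b i)| <= D * (1 + c^-1) + c * \sum_i normsq (b i).
Proof.
move=> c_gt0 gb_le.
apply: le_trans (ler_sum _ (fun i _ => dist_normsq_le (b i) (g i) c_gt0)) _.
rewrite big_split /= -mulr_suml -mulr_sumr lerD2r ler_wpM2r //.
by rewrite addr_ge0 // invr_ge0 ltW.
Qed.

Lemma L1_normalize_le (R : realType) N (B G : 'I_N -> R) (P e : R) :
  0 < P -> (forall i, 0 <= B i) -> (forall i, 0 <= G i) -> \sum_i B i = P ->
  \sum_i `|G i - B i| <= e * P ->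
  \sum_i `|B i / P - G i / \sum_l G l| <= 2 * e.
Proof.
move=> P_gt0 B_ge0 G_ge0 sumB GB_le; set T := \sum_l G l.
have T_ge0 : 0 <= T by rewrite sumr_ge0.
have TP_le : `|T - P| <= e * P.
  by apply: le_trans _ GB_le; rewrite -sumB -sumrB ler_norm_sum.
have [T0|T_neq0] := eqVneq T 0.
  rewrite T0 invr0.
  under eq_bigr => i _ do rewrite mulr0 subr0 (ger0_norm (divr_ge0 (B_ge0 i) (ltW P_gt0))).
  rewrite -mulr_suml sumB divff ?gt_eqF //.
  move: TP_le; rewrite T0 sub0r normrN gtr0_norm // -{1}[P]mul1r ler_pM2r //; lra.
have T_gt0 : 0 < T by rewrite lt_def T_neq0.
have term_le i : `|B i / P - G i / T| <= `|G i - B i| / P + G i * `|P^-1 - T^-1|.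
  have -> : B i / P - G i / T = - ((G i - B i) / P) + G i * (P^-1 - T^-1).
    by field; rewrite !gt_eqF.
  apply: le_trans (ler_normD _ _) _.
  by rewrite normrN !normrM [`|P^-1|]gtr0_norm ?invr_gt0 // (ger0_norm (G_ge0 _)).
apply: le_trans (ler_sum _ (fun i _ => term_le i)) _.
rewrite big_split /= -!mulr_suml -/T.
have -> : T * `|P^-1 - T^-1| = `|T - P| / P.
  rewrite -[T in T * _]ger0_norm // -normrM (_ : T * _ = (T - P) / P); last first.
    by field; rewrite !gt_eqF.
  by rewrite normrM [`|P^-1|]gtr0_norm ?invr_gt0.
have : (\sum_i `|G i - B i|) / P <= e by rewrite ler_pdivrMr.
have : `|T - P| / P <= e by rewrite ler_pdivrMr.
lra.
Qed.

Lemma normsq_FT (R : realType) N p (alpha : 'I_p -> R[i]) c : (0 < N)%N ->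
  normsq (FT N alpha c) = normsq (dft (omega R N) alpha c) / N%:R.
Proof.
by move=> N_gt0; rewrite /FT normsq_scale exprVn sqr_sqrtr ?ler0n // mulrC.
Qed.

Lemma L1distE (R : realType) P q (alpha : 'I_P -> R[i]) : (0 < P)%N -> (0 < q)%N ->
  L1dist q alpha = \sum_(i < P)
    `|normsq (dft (omega R P) alpha i) / P%:R
      - normsq (dft (omega R q) alpha (iprime P q i))
        / \sum_(l < P) normsq (dft (omega R q) alpha (iprime P q l))|.
Proof.
move=> P_gt0 q_gt0; apply: eq_bigr => i _; rewrite /D_beta /D_gamma !normsq_FT //.
under eq_bigr do rewrite normsq_FT //.
by rewrite -mulr_suml invf_div mulrA divfK // pnatr_eq0 -lt0n.
Qed.

Theorem theorem1 (R : realType) (p : nat -> nat) :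
  (forall n, (0 < p n)%N) ->
  (exists k C : nat, forall n, (p n <= C * 2 ^ (n ^ k))%N) ->
  forall s : {poly R}, (forall n : nat, 0 < s.[n%:R]) ->
  exists t : {poly R}, forall n q : nat,
    t.[n%:R] * (p n)%:R <= q%:R ->
    forall alpha : 'I_(p n) -> R[i], is_superposition alpha ->
      L1dist q alpha <= (s.[n%:R])^-1.
Proof.
move=> p_gt0 _ s s_gt0; exists (256%:P * (s + 1)) => n q.
rewrite hornerM hornerC hornerD hornerC.
move: (p_gt0 n) (s_gt0 n); set P := p n; set S := s.[n%:R].
move=> P_gt0 S_gt0 q_ge alpha alpha_unit.
have Pr_gt0 : 0 < P%:R :> R by rewrite ltr0n.
have q_gt0 : (0 < q)%N.
  by rewrite -(ltr0n R); apply: lt_le_trans q_ge; rewrite !mulr_gt0 // addr_gt0.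
set x : R := 16 * P%:R / q%:R.
have x_gt0 : 0 < x by rewrite !mulr_gt0 ?invr_gt0 ?ltr0n.
have x_small : x * (16 * (S + 1)) <= 1.
  by rewrite /x mulrAC ler_pdivrMr ?ltr0n // mul1r; apply: le_trans q_ge; lra.
have x_le_half : x <= 1 / 2 by nra.
rewrite L1distE //; apply: le_trans (L1_normalize_le (e := 4 * x ^+ 2 + 4 * x) _ _ _ _ _) _.
- exact: Pr_gt0.
- by move=> i; exact: normsq_ge0.
- by move=> i; exact: normsq_ge0.
- by rewrite parseval ?omega_prim_root // alpha_unit mulr1.
- apply: le_trans (sum_dist_normsq_le (c := 2 * x) _ _) _; first by rewrite mulr_gt0.
    exact: sum_normsq_dft_iprime_sub_le.
  rewrite parseval ?omega_prim_root // alpha_unit mulr1 -/x.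
  by rewrite [X in X <= _](_ : _ = (4 * x ^+ 2 + 4 * x) * P%:R) //; field; rewrite gt_eqF.
- rewrite -[X in _ <= X]div1r ler_pdivlMr //; nra.
Qed.
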